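(* Let $\mathcal X$ be the Hawaiian earring with base point $0$. For a loop $h:[0,1]\to\mathcal X$ with $h(0)=h(1)=0$ and $n\in\mathbb N$, let $h^{\{n\}}:[0,1]\to C_n$ be defined by $h^{\{n\}}(x)=h(x)$ if $h(x)\in C_n$ and $h^{\{n\}}(x)=0$ otherwise, and let $A(h)=\{n\in\mathbb N: h^{\{n\}}:[0,1]\to C_n\text{ is not null-homotopic}\}$. Then: (i) if two such loops $f,g$ are homotopic (rel endpoints) in $\mathcal X$, then $A(f)=A(g)$; (ii) $|h^{-1}(0)|\ge|A(h)|$; (iii) if $[f]\in\mathfrak P^\omega(\mathcal X,0)$ then $A(f)$ is finite.
   Context: For $n\in\mathbb N=\{1,2,\dots\}$, $C_n=\{(x,y)\in\mathbb R^2: x^2+(y-\tfrac1n)^2=\tfrac1{n^2}\}$ and the Hawaiian earring is $\mathcal X=\bigcup_{n\in\mathbb N}C_n\subseteq\mathbb R^2$; all $C_n$ pass through $0$. An $\omega$-loop at $0$ is a continuous $k:[0,1]\to\mathcal X$ with $k(0)=k(1)=0$ and $|k^{-1}(x)|$ finite for every $x\in\mathcal X$; $\mathfrak P^\omega(\mathcal X,0)$ is the subgroup of $\pi_1(\mathcal X,0)$ generated by homotopy classes (rel endpoints) of $\omega$-loops at $0$ (it coincides with the set of such classes). *)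

From Stdlib Require Import Reals Lra List.
Open Scope R_scope.

Definition pt := (R * R)%type.
Definition origin : pt := (0, 0).

Definition dist2 (p q : pt) : R :=
  sqrt ((fst p - fst q)^2 + (snd p - snd q)^2).

Definition unit_I (t : R) : Prop := 0 <= t <= 1.

Definition in_C (n : nat) (p : pt) : Prop :=
  (fst p)^2 + (snd p - / INR n)^2 = (/ INR n)^2.

Definition in_X (p : pt) : Prop := exists n : nat, (1 <= n)%nat /\ in_C n p.

Definition path_cont (h : R -> pt) : Prop :=
  forall t, unit_I t -> forall eps, 0 < eps -> exists delta, 0 < delta /\
    forall s, unit_I s -> Rabs (s - t) < delta -> dist2 (h s) (h t) < eps.

Definition sq_cont (H : R -> R -> pt) : Prop :=
  forall s t, unit_I s -> unit_I t -> forall eps, 0 < eps ->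
    exists delta, 0 < delta /\
    forall s' t', unit_I s' -> unit_I t' -> Rabs (s' - s) < delta ->
      Rabs (t' - t) < delta -> dist2 (H s' t') (H s t) < eps.

Definition loop_in (S : pt -> Prop) (h : R -> pt) : Prop :=
  path_cont h /\ (forall t, unit_I t -> S (h t)) /\ h 0 = origin /\ h 1 = origin.

Definition homotopic_rel (S : pt -> Prop) (f g : R -> pt) : Prop :=
  exists H : R -> R -> pt, sq_cont H /\
    (forall s t, unit_I s -> unit_I t -> S (H s t)) /\
    (forall s, unit_I s -> H s 0 = f s) /\
    (forall s, unit_I s -> H s 1 = g s) /\
    (forall t, unit_I t -> H 0 t = origin /\ H 1 t = origin).

Definition const_loop : R -> pt := fun _ => origin.

Definition null_homotopic_in (S : pt -> Prop) (h : R -> pt) : Prop :=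
  homotopic_rel S h const_loop.

Definition in_C_dec (n : nat) (p : pt) : {in_C n p} + {~ in_C n p} :=
  Req_EM_T _ _.

Definition restr (n : nat) (h : R -> pt) : R -> pt :=
  fun x => if in_C_dec n (h x) then h x else origin.

Definition A_set (h : R -> pt) (n : nat) : Prop :=
  (1 <= n)%nat /\ ~ null_homotopic_in (in_C n) (restr n h).

Definition omega_loop (k : R -> pt) : Prop :=
  loop_in in_X k /\
  forall x, in_X x -> exists l : list R, forall t, unit_I t -> k t = x -> In t l.

Definition concat (f g : R -> pt) : R -> pt :=
  fun t => if Rle_dec t (1/2) then f (2 * t) else g (2 * t - 1).
Definition rev_path (f : R -> pt) : R -> pt := fun t => f (1 - t).

(* loops representing elements of the subgroup generated by classes of
   omega-loops: finite products of omega-loops and their inverses *)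
Inductive gen_omega : (R -> pt) -> Prop :=
| gen_const : gen_omega const_loop
| gen_cons : forall k g, omega_loop k -> gen_omega g -> gen_omega (concat k g)
| gen_cons_inv : forall k g, omega_loop k -> gen_omega g ->
    gen_omega (concat (rev_path k) g).

Definition in_P_omega (f : R -> pt) : Prop :=
  exists g, gen_omega g /\ homotopic_rel in_X f g.

(* Collapsing every circle except C_n to the origin is a retraction of the earring
   onto C_n, continuous because off the origin the earring is locally a single
   punctured circle; [restr n h] is h followed by it, so homotopies in the earring
   descend to C_n, which gives (i).  If h^{n} is essential, h meets C_n off the
   origin, and the last time before that at which it is outside the punctured
   circle is a zero of h followed by an arc in C_n; different n give different
   zeros, which gives (ii).  An omega-loop has finitely many zeros, and
   A(k g) is contained in A(k) ∪ A(g) and A(k^-1) in A(k), so (iii) follows with (i). *)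

From Pilot Require Import Defs.
From Stdlib Require Import Reals Lra Lia List Classical ClassicalEpsilon.
From Coquelicot Require Import Coquelicot.
Open Scope R_scope.

Lemma dist2_diag p : dist2 p p = 0.
Proof.
  unfold dist2. replace ((fst p - fst p) ^ 2 + (snd p - snd p) ^ 2) with 0 by ring.
  exact sqrt_0.
Qed.

Lemma dist2_lt_coord p q d :
  dist2 q p < d -> Rabs (fst q - fst p) < d /\ Rabs (snd q - snd p) < d.
Proof.
  unfold dist2; intros H.
  split; eapply Rle_lt_trans; try exact H; rewrite <- sqrt_Rsqr_abs;
    apply sqrt_le_1_alt; unfold Rsqr;
    generalize (fst q - fst p) (snd q - snd p); intros a b; nra.
Qed.

Lemma in_C_origin n : in_C n origin.
Proof. unfold in_C, origin; simpl; ring. Qed.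

Lemma in_X_origin : in_X origin.
Proof. exists 1%nat; split; [lia | apply in_C_origin]. Qed.

(* A point q <> 0 of C_n satisfies n = 2 y / (x^2 + y^2), a continuous function of q. *)
Definition circle_index (q : pt) : R :=
  2 * snd q * / (fst q * fst q + snd q * snd q).

Lemma in_C_snd_pos n q : (1 <= n)%nat -> in_C n q -> q <> origin -> 0 < snd q.
Proof.
  destruct q as [x y]; unfold in_C, origin; simpl; intros Hn Hq Hne.
  assert (Hinv : 0 < / INR n) by (apply Rinv_0_lt_compat, lt_0_INR; lia).
  destruct (Rtotal_order y 0) as [Hy | [Hy | Hy]]; [nra | | lra].
  subst y; exfalso; apply Hne; f_equal; nra.
Qed.

Lemma circle_index_in_C n q :
  (1 <= n)%nat -> in_C n q -> q <> origin -> circle_index q = INR n.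
Proof.
  intros Hn Hq Hne; pose proof (in_C_snd_pos n q Hn Hq Hne) as Hy.
  destruct q as [x y]; unfold in_C, circle_index in *; cbn [fst snd] in *.
  assert (HN : 0 < INR n) by (apply lt_0_INR; lia).
  assert (Hxy : x * x + y * y = 2 * y / INR n).
  { replace (x * x + y * y) with (x ^ 2 + (y - / INR n) ^ 2 - (/ INR n) ^ 2 + 2 * y / INR n)
      by (field; lra).
    rewrite Hq; ring. }
  rewrite Hxy; field; lra.
Qed.

Lemma circle_index_continuous p : p <> origin ->
  exists d, 0 < d /\ forall q, Rabs (fst q - fst p) < d -> Rabs (snd q - snd p) < d ->
    Rabs (circle_index q - circle_index p) < 1.
Proof.
  intros Hne.
  assert (Hden : fst p * fst p + snd p * snd p <> 0).
  { destruct p as [x y]; simpl; intro H0; apply Hne; unfold origin; f_equal; nra. }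
  assert (Hc : continuous circle_index p).
  { apply (continuous_mult (K := R_AbsRing) (fun q : pt => 2 * snd q)).
    - apply (continuous_mult (K := R_AbsRing) (fun _ : pt => 2));
        [apply continuous_const | apply continuous_snd].
    - apply (continuous_comp (fun q : pt => fst q * fst q + snd q * snd q) Rinv);
        [| exact (continuous_Rinv _ Hden)].
      apply (continuous_plus (V := R_NormedModule) (fun q : pt => fst q * fst q));
        apply (continuous_mult (K := R_AbsRing));
        (apply continuous_fst || apply continuous_snd). }
  destruct (proj1 (filterlim_locally _ _) Hc (mkposreal 1 Rlt_0_1)) as [[d Hd] Hball].
  exists d; split; [exact Hd |]; intros q Hx Hy.
  apply (Hball q); split; assumption.
Qed.

Lemma INR_close_eq k m : Rabs (INR k - INR m) < 1 -> k = m.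
Proof.
  intros H; apply Rabs_def2 in H.
  destruct (Nat.lt_total k m) as [Hkm | [Hkm | Hkm]]; [exfalso | exact Hkm | exfalso];
    [ assert (INR (S k) <= INR m) by (apply le_INR; lia)
    | assert (INR (S m) <= INR k) by (apply le_INR; lia) ];
    rewrite S_INR in *; lra.
Qed.

Lemma in_C_isolated m p : (1 <= m)%nat -> in_C m p -> p <> origin ->
  exists d, 0 < d /\ forall k q, (1 <= k)%nat -> in_C k q -> dist2 q p < d ->
    k = m /\ q <> origin.
Proof.
  intros Hm Hp Hne.
  pose proof (in_C_snd_pos m p Hm Hp Hne) as Hy.
  destruct (circle_index_continuous p Hne) as [d [Hd Hindex]].
  exists (Rmin d (snd p)); split; [now apply Rmin_glb_lt |].
  intros k q Hk Hq Hqp.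
  destruct (dist2_lt_coord p q _ Hqp) as [Hx Hy'].
  assert (Hq0 : q <> origin).
  { intros ->; pose proof (Rmin_r d (snd p)); apply Rabs_def2 in Hy'; simpl in Hy'; lra. }
  split; [| exact Hq0].
  apply INR_close_eq.
  rewrite <- (circle_index_in_C k q), <- (circle_index_in_C m p) by assumption.
  apply Hindex; eapply Rlt_le_trans; eauto using Rmin_l.
Qed.

Lemma in_C_unique n m p : (1 <= n)%nat -> (1 <= m)%nat ->
  in_C n p -> in_C m p -> p <> origin -> n = m.
Proof.
  intros Hn Hm Hpn Hpm Hne; apply INR_eq.
  rewrite <- (circle_index_in_C n p), <- (circle_index_in_C m p) by assumption.
  reflexivity.
Qed.

Definition retract_C (n : nat) (p : pt) : pt := if in_C_dec n p then p else origin.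

Lemma restr_retract_C n h x : restr n h x = retract_C n (h x).
Proof. reflexivity. Qed.

Lemma retract_C_in n p : in_C n (retract_C n p).
Proof. unfold retract_C; destruct (in_C_dec n p); auto using in_C_origin. Qed.

Lemma retract_C_origin n : retract_C n origin = origin.
Proof. unfold retract_C; destruct (in_C_dec n origin); reflexivity. Qed.

Lemma retract_C_continuous n p : (1 <= n)%nat -> in_X p ->
  forall eps, 0 < eps -> exists d, 0 < d /\
    forall q, in_X q -> dist2 q p < d -> dist2 (retract_C n q) (retract_C n p) < eps.
Proof.
  intros Hn Hp eps Heps.
  destruct (classic (p = origin)) as [-> | Hne].
  - exists eps; split; [exact Heps |]; intros q _ Hq.
    rewrite retract_C_origin; unfold retract_C.
    destruct (in_C_dec n q); [exact Hq | rewrite dist2_diag; exact Heps].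
  - destruct Hp as [m [Hm Hpm]].
    destruct (in_C_isolated m p Hm Hpm Hne) as [d [Hd Hsep]].
    exists (Rmin d eps); split; [now apply Rmin_glb_lt |].
    intros q [k [Hk Hqk]] Hq.
    destruct (Hsep k q Hk Hqk) as [-> Hq0]; [eapply Rlt_le_trans; eauto using Rmin_l |].
    unfold retract_C; destruct (in_C_dec n q) as [Hqn | Hqn], (in_C_dec n p) as [Hpn | Hpn].
    + eapply Rlt_le_trans; eauto using Rmin_r.
    + exfalso; apply Hpn; rewrite <- (in_C_unique m n q Hm Hn Hqk Hqn Hq0); exact Hpm.
    + exfalso; apply Hqn; rewrite <- (in_C_unique m n p Hm Hn Hpm Hpn Hne); exact Hqk.
    + rewrite dist2_diag; exact Heps.
Qed.

Ltac solve_unit_I := unfold unit_I in *; lra.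

Lemma homotopic_rel_intro S f g (H : R -> R -> pt) :
  sq_cont H ->
  (forall s t, unit_I s -> unit_I t -> S (H s t)) ->
  (forall s, unit_I s -> H s 0 = f s) ->
  (forall s, unit_I s -> H s 1 = g s) ->
  (forall t, unit_I t -> H 0 t = origin) ->
  (forall t, unit_I t -> H 1 t = origin) ->
  homotopic_rel S f g.
Proof. intros; exists H; repeat split; auto. Qed.

Lemma sq_cont_const c : sq_cont (fun _ _ => c).
Proof. intros s t _ _ eps Heps; exists 1; split; [lra |]; intros; now rewrite dist2_diag. Qed.

Lemma sq_cont_swap H : sq_cont H -> sq_cont (fun s t => H t s).
Proof.
  intros HH s t Is It eps Heps; destruct (HH t s It Is eps Heps) as [d [Hd Hc]].
  exists d; split; [exact Hd |]; intros; apply Hc; auto.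
Qed.

Lemma sq_cont_reflect H : sq_cont H -> sq_cont (fun s t => H (1 - s) t).
Proof.
  intros HH s t Is It eps Heps.
  destruct (HH (1 - s) t ltac:(solve_unit_I) It eps Heps) as [d [Hd Hc]].
  exists d; split; [exact Hd |]; intros s' t' Is' It' Hs Ht.
  apply Hc; [solve_unit_I | exact It' | | exact Ht].
  now replace (1 - s' - (1 - s)) with (- (s' - s)) by ring; rewrite Rabs_Ropp.
Qed.

Lemma Rabs_scale2 u : Rabs (2 * u) = 2 * Rabs u.
Proof. rewrite Rabs_mult, (Rabs_pos_eq 2) by lra; reflexivity. Qed.

Ltac split_Rmin H H1 H2 :=
  pose proof (Rlt_le_trans _ _ _ H (Rmin_l _ _)) as H1;
  pose proof (Rlt_le_trans _ _ _ H (Rmin_r _ _)) as H2; clear H.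

Lemma sq_cont_paste A B : sq_cont A -> sq_cont B -> (forall t, unit_I t -> A 1 t = B 0 t) ->
  sq_cont (fun s t => if Rle_dec s (1/2) then A (2 * s) t else B (2 * s - 1) t).
Proof.
  intros HA HB Hseam s t Is It eps Heps.
  destruct (Rlt_le_dec s (1/2)) as [Hs | Hs]; [| destruct (Req_dec s (1/2)) as [-> | Hs']].
  - destruct (HA (2 * s) t ltac:(solve_unit_I) It eps Heps) as [d [Hd Hc]].
    exists (Rmin (d / 2) (1/2 - s)); split; [apply Rmin_glb_lt; lra |].
    intros s' t' Is' It' Hs1 Ht1; split_Rmin Hs1 Hsl Hsr; split_Rmin Ht1 Htl Htr.
    pose proof (Rabs_def2 _ _ Hsr).
    destruct (Rle_dec s' (1/2)); [| lra]; destruct (Rle_dec s (1/2)); [| lra].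
    apply Hc; [solve_unit_I | exact It' | | lra].
    replace (2 * s' - 2 * s) with (2 * (s' - s)) by ring; rewrite Rabs_scale2; lra.
  - destruct (HA 1 t ltac:(solve_unit_I) It eps Heps) as [d1 [Hd1 Hc1]].
    destruct (HB 0 t ltac:(solve_unit_I) It eps Heps) as [d2 [Hd2 Hc2]].
    exists (Rmin (d1 / 2) (d2 / 2)); split; [apply Rmin_glb_lt; lra |].
    intros s' t' Is' It' Hs1 Ht1; split_Rmin Hs1 Hsl Hsr; split_Rmin Ht1 Htl Htr.
    destruct (Rle_dec (1/2) (1/2)); [| lra]; replace (2 * (1/2)) with 1 by field.
    destruct (Rle_dec s' (1/2)).
    + apply Hc1; [solve_unit_I | exact It' | | lra].
      replace (2 * s' - 1) with (2 * (s' - 1/2)) by field; rewrite Rabs_scale2; lra.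
    + rewrite (Hseam t It); apply Hc2; [solve_unit_I | exact It' | | lra].
      replace (2 * s' - 1 - 0) with (2 * (s' - 1/2)) by field; rewrite Rabs_scale2; lra.
  - destruct (HB (2 * s - 1) t ltac:(solve_unit_I) It eps Heps) as [d [Hd Hc]].
    exists (Rmin (d / 2) (s - 1/2)); split; [apply Rmin_glb_lt; lra |].
    intros s' t' Is' It' Hs1 Ht1; split_Rmin Hs1 Hsl Hsr; split_Rmin Ht1 Htl Htr.
    pose proof (Rabs_def2 _ _ Hsr).
    destruct (Rle_dec s' (1/2)); [lra |]; destruct (Rle_dec s (1/2)); [lra |].
    apply Hc; [solve_unit_I | exact It' | | lra].
    replace (2 * s' - 1 - (2 * s - 1)) with (2 * (s' - s)) by ring; rewrite Rabs_scale2; lra.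
Qed.

Lemma homotopic_rel_sym S f g : homotopic_rel S f g -> homotopic_rel S g f.
Proof.
  intros [H [Hc [HS [H0 [H1 He]]]]].
  apply (homotopic_rel_intro _ _ _ (fun s t => H s (1 - t))).
  - apply (sq_cont_swap (fun s t => H t (1 - s))), (sq_cont_reflect (fun s t => H t s)).
    exact (sq_cont_swap H Hc).
  - intros s t Is It; apply HS; solve_unit_I.
  - intros s Is; rewrite Rminus_0_r; auto.
  - intros s Is; rewrite Rminus_diag; auto.
  - intros t It; apply He; solve_unit_I.
  - intros t It; apply He; solve_unit_I.
Qed.

Lemma homotopic_rel_trans S f g k :
  homotopic_rel S f g -> homotopic_rel S g k -> homotopic_rel S f k.
Proof.
  intros [H1 [Hc1 [HS1 [H10 [H11 He1]]]]] [H2 [Hc2 [HS2 [H20 [H21 He2]]]]].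
  apply (homotopic_rel_intro _ _ _
    (fun s t => if Rle_dec t (1/2) then H1 s (2 * t) else H2 s (2 * t - 1))).
  - apply (sq_cont_swap
      (fun s t => if Rle_dec s (1/2) then H1 t (2 * s) else H2 t (2 * s - 1))).
    apply (sq_cont_paste (fun s t => H1 t s) (fun s t => H2 t s)); try now apply sq_cont_swap.
    intros t It; rewrite H11, H20; auto.
  - intros s t Is It; destruct (Rle_dec t (1/2)); [apply HS1 | apply HS2]; solve_unit_I.
  - intros s Is; destruct (Rle_dec 0 (1/2)); [| lra]; rewrite Rmult_0_r; auto.
  - intros s Is; destruct (Rle_dec 1 (1/2)); [lra |]; replace (2 * 1 - 1) with 1 by ring; auto.
  - intros t It; destruct (Rle_dec t (1/2)); [apply He1 | apply He2]; solve_unit_I.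
  - intros t It; destruct (Rle_dec t (1/2)); [apply He1 | apply He2]; solve_unit_I.
Qed.

Lemma homotopic_rel_restr n f g : (1 <= n)%nat -> homotopic_rel in_X f g ->
  homotopic_rel (in_C n) (restr n f) (restr n g).
Proof.
  intros Hn [H [Hc [HS [H0 [H1 He]]]]].
  apply (homotopic_rel_intro _ _ _ (fun s t => retract_C n (H s t))).
  - intros s t Is It eps Heps.
    destruct (retract_C_continuous n (H s t) Hn (HS s t Is It) eps Heps) as [d1 [Hd1 Hr]].
    destruct (Hc s t Is It d1 Hd1) as [d2 [Hd2 Hc2]].
    exists d2; split; [exact Hd2 |]; intros; apply Hr; auto.
  - intros; apply retract_C_in.
  - intros s Is; rewrite H0; auto.
  - intros s Is; rewrite H1; auto.
  - intros t It; rewrite (proj1 (He t It)); apply retract_C_origin.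
  - intros t It; rewrite (proj2 (He t It)); apply retract_C_origin.
Qed.

Lemma A_set_homotopy_invariant f g :
  homotopic_rel in_X f g -> forall n, A_set f n <-> A_set g n.
Proof.
  intros Hfg n; pose proof (fun Hn => homotopic_rel_restr n f g Hn Hfg) as Hr.
  unfold A_set, null_homotopic_in.
  split; intros [Hn Hnot]; split; auto; intro Hnull; apply Hnot.
  - exact (homotopic_rel_trans _ _ _ _ (Hr Hn) Hnull).
  - exact (homotopic_rel_trans _ _ _ _ (homotopic_rel_sym _ _ _ (Hr Hn)) Hnull).
Qed.

Lemma null_homotopic_restr_const n : null_homotopic_in (in_C n) (restr n const_loop).
Proof.
  apply (homotopic_rel_intro _ _ _ (fun _ _ => origin)); intros; auto using sq_cont_const, in_C_origin.
  symmetry; apply retract_C_origin.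
Qed.

Lemma null_homotopic_restr_rev n k : null_homotopic_in (in_C n) (restr n k) ->
  null_homotopic_in (in_C n) (restr n (rev_path k)).
Proof.
  intros [H [Hc [HS [H0 [H1 He]]]]].
  apply (homotopic_rel_intro _ _ _ (fun s t => H (1 - s) t)).
  - exact (sq_cont_reflect H Hc).
  - intros s t Is It; apply HS; solve_unit_I.
  - intros s Is; rewrite H0 by solve_unit_I; reflexivity.
  - intros s Is; rewrite H1 by solve_unit_I; reflexivity.
  - intros t It; rewrite Rminus_0_r; apply He, It.
  - intros t It; rewrite Rminus_diag; apply He, It.
Qed.

Lemma restr_concat n k g s : restr n (Defs.concat k g) s =
  if Rle_dec s (1/2) then restr n k (2 * s) else restr n g (2 * s - 1).
Proof. unfold restr, Defs.concat; destruct (Rle_dec s (1/2)); reflexivity. Qed.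

Lemma null_homotopic_restr_concat n k g : null_homotopic_in (in_C n) (restr n k) ->
  null_homotopic_in (in_C n) (restr n g) ->
  null_homotopic_in (in_C n) (restr n (Defs.concat k g)).
Proof.
  intros [H1 [Hc1 [HS1 [H10 [H11 He1]]]]] [H2 [Hc2 [HS2 [H20 [H21 He2]]]]].
  apply (homotopic_rel_intro _ _ _
    (fun s t => if Rle_dec s (1/2) then H1 (2 * s) t else H2 (2 * s - 1) t)).
  - apply sq_cont_paste; auto.
    intros t It; rewrite (proj2 (He1 t It)), (proj1 (He2 t It)); reflexivity.
  - intros s t Is It; destruct (Rle_dec s (1/2)); [apply HS1 | apply HS2]; solve_unit_I.
  - intros s Is; rewrite restr_concat.
    destruct (Rle_dec s (1/2)); [apply H10 | apply H20]; solve_unit_I.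
  - intros s Is; destruct (Rle_dec s (1/2)); [rewrite H11 | rewrite H21]; solve_unit_I || reflexivity.
  - intros t It; destruct (Rle_dec 0 (1/2)); [| lra]; rewrite Rmult_0_r; apply He1, It.
  - intros t It; destruct (Rle_dec 1 (1/2)); [lra |].
    replace (2 * 1 - 1) with 1 by ring; apply He2, It.
Qed.

Lemma A_set_const n : ~ A_set const_loop n.
Proof. intros [_ Hnot]; exact (Hnot (null_homotopic_restr_const n)). Qed.

Lemma A_set_rev n k : A_set (rev_path k) n -> A_set k n.
Proof.
  intros [Hn Hnot]; split; [exact Hn |].
  intro Hnull; exact (Hnot (null_homotopic_restr_rev n k Hnull)).
Qed.

Lemma A_set_concat n k g : A_set (Defs.concat k g) n -> A_set k n \/ A_set g n.
Proof.
  intros [Hn Hnot]; apply NNPP; intros Hneither; apply Hnot.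
  apply null_homotopic_restr_concat; apply NNPP; intro Hnull; apply Hneither;
    [left | right]; split; assumption.
Qed.

Lemma A_set_hits_circle h n : A_set h n -> exists s, unit_I s /\ in_C n (h s) /\ h s <> origin.
Proof.
  intros [Hn Hnot]; apply NNPP; intros Hmiss; apply Hnot.
  apply (homotopic_rel_intro _ _ _ (fun _ _ => origin)); intros; auto using sq_cont_const, in_C_origin.
  rewrite restr_retract_C; unfold retract_C.
  destruct (in_C_dec n (h s)) as [Hs | Hs]; [| reflexivity].
  apply NNPP; intro Hne; apply Hmiss; exists s; auto.
Qed.

Lemma path_near_punctured_circle h a m : path_cont h -> (forall t, unit_I t -> in_X (h t)) ->
  unit_I a -> (1 <= m)%nat -> in_C m (h a) -> h a <> origin ->
  exists del, 0 < del /\ forall u, unit_I u -> Rabs (u - a) < del ->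
    in_C m (h u) /\ h u <> origin.
Proof.
  intros Hc HX Ia Hm Ham Hne.
  destruct (in_C_isolated m (h a) Hm Ham Hne) as [d [Hd Hsep]].
  destruct (Hc a Ia d Hd) as [del [Hdel Hcont]].
  exists del; split; [exact Hdel |]; intros u Iu Hu.
  destruct (HX u Iu) as [k [Hk Huk]].
  destruct (Hsep k (h u) Hk Huk (Hcont u Iu Hu)) as [-> Hu0]; auto.
Qed.

Definition enters_circle_at (h : R -> pt) (n : nat) (a : R) : Prop :=
  unit_I a /\ h a = origin /\ exists s, a < s /\ s <= 1 /\
    forall u, a < u -> u <= s -> in_C n (h u) /\ h u <> origin.

Lemma enters_circle_at_index h n m a : (1 <= n)%nat -> (1 <= m)%nat ->
  enters_circle_at h n a -> enters_circle_at h m a -> n = m.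
Proof.
  intros Hn Hm [_ [_ [s1 [Ha1 [_ Hs1]]]]] [_ [_ [s2 [Ha2 [_ Hs2]]]]].
  assert (Hu : a < Rmin s1 s2) by (apply Rmin_glb_lt; assumption).
  destruct (Hs1 _ Hu (Rmin_l _ _)) as [Hun Hu0].
  destruct (Hs2 _ Hu (Rmin_r _ _)) as [Hum _].
  exact (in_C_unique n m _ Hn Hm Hun Hum Hu0).
Qed.

(* [a] is the supremum of the times before [s] outside the punctured circle; if
   [h a] were not the origin, a neighbourhood of [a] would map into one punctured
   circle, necessarily C_n, contradicting the choice of [a]. *)
Lemma A_set_enters_circle h n : loop_in in_X h -> A_set h n -> exists a, enters_circle_at h n a.
Proof.
  intros [Hc [HX [Hh0 _]]] HA; pose proof (proj1 HA) as Hn.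
  destruct (A_set_hits_circle h n HA) as [s [Is [Hsn Hs0]]].
  set (E := fun u => 0 <= u <= s /\ ~ (in_C n (h u) /\ h u <> origin)).
  assert (E0 : E 0) by (split; [solve_unit_I | intros [_ Hne]; exact (Hne Hh0)]).
  destruct (completeness E) as [a [Hub Hlub]]; [exists s; intros u [Hu _]; lra | now exists 0 |].
  assert (Ha : 0 <= a <= s) by (split; [apply Hub, E0 | apply Hlub; intros u [Hu _]; lra]).
  assert (Hright : forall u, a < u -> u <= s -> in_C n (h u) /\ h u <> origin).
  { intros u Hau Hus; apply NNPP; intro Hbad.
    assert (u <= a) by (apply Hub; split; [lra | exact Hbad]); lra. }
  assert (Ia : unit_I a) by solve_unit_I.
  assert (Hza : h a = origin).
  { apply NNPP; intro Hne; destruct (HX a Ia) as [m [Hm Ham]].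
    destruct (path_near_punctured_circle h a m Hc HX Ia Hm Ham Hne) as [del [Hdel Hnear]].
    assert (Hnm : n = m).
    { set (v := Rmin s (a + del / 2)).
      destruct (Req_dec a s) as [-> | Has]; [exact (in_C_unique n m _ Hn Hm Hsn Ham Hs0) |].
      assert (Hav : a < v) by (apply Rmin_glb_lt; lra).
      destruct (Hright v Hav (Rmin_l _ _)) as [Hvn Hv0].
      assert (v <= s) by apply Rmin_l; assert (v <= a + del / 2) by apply Rmin_r.
      refine (in_C_unique n m _ Hn Hm Hvn (proj1 (Hnear v _ _)) Hv0);
        [solve_unit_I | apply Rabs_def1; lra]. }
    subst m.
    assert (a <= a - del); [| lra].
    apply Hlub; intros u Eu; pose proof (Hub u Eu) as Hua.
    destruct (Rle_dec u (a - del)) as [Hle | Hgt]; [exact Hle | exfalso].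
    destruct Eu as [Iu Hbad]; apply Hbad, Hnear; [solve_unit_I | apply Rabs_def1; lra]. }
  exists a; split; [exact Ia | split; [exact Hza |]].
  exists s; split; [| split; [solve_unit_I | exact Hright]].
  destruct (Req_dec a s) as [-> | Has]; [contradiction | lra].
Qed.

Lemma A_set_injects_into_zeros h : loop_in in_X h ->
  exists phi : nat -> R,
    (forall n, A_set h n -> unit_I (phi n) /\ h (phi n) = origin) /\
    (forall n m, A_set h n -> A_set h m -> phi n = phi m -> n = m).
Proof.
  intros Hl; exists (fun n => epsilon (inhabits 0) (enters_circle_at h n)).
  assert (Hentry : forall n, A_set h n ->
    enters_circle_at h n (epsilon (inhabits 0) (enters_circle_at h n))).
  { intros n HA; apply epsilon_spec, A_set_enters_circle; assumption. }
  split.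
  - intros n HA; destruct (Hentry n HA) as [Ia [Hz _]]; split; assumption.
  - intros n m HAn HAm Heq; pose proof (Hentry n HAn) as Hn; rewrite Heq in Hn.
    exact (enters_circle_at_index h n m _ (proj1 HAn) (proj1 HAm) Hn (Hentry m HAm)).
Qed.

Lemma injective_into_list_bounded {A : Type} (l : list A) :
  forall (P : nat -> Prop) (phi : nat -> A),
  (forall n, P n -> In (phi n) l) ->
  (forall n m, P n -> P m -> phi n = phi m -> n = m) ->
  exists N, forall n, P n -> (n <= N)%nat.
Proof.
  induction l as [| x l IH]; intros P phi Hin Hinj.
  - exists 0%nat; intros n Pn; destruct (Hin n Pn).
  - destruct (classic (exists n0, P n0 /\ phi n0 = x)) as [[n0 [P0 E0]] | Hnone].
    + destruct (IH (fun n => P n /\ n <> n0) phi) as [N HN].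
      * intros n [Pn Hne]; destruct (Hin n Pn) as [Hx | Hx]; [| exact Hx].
        exfalso; apply Hne, Hinj; congruence.
      * intros n m [Pn _] [Pm _]; apply Hinj; assumption.
      * exists (Nat.max N n0); intros n Pn.
        destruct (Nat.eq_dec n n0) as [-> | Hne]; [lia | specialize (HN n (conj Pn Hne)); lia].
    + apply (IH P phi); [| exact Hinj].
      intros n Pn; destruct (Hin n Pn) as [Hx | Hx]; [| exact Hx].
      exfalso; apply Hnone; exists n; auto.
Qed.

Lemma omega_loop_A_set_bounded k : omega_loop k -> exists N, forall n, A_set k n -> (n <= N)%nat.
Proof.
  intros [Hl Hfin]; destruct (A_set_injects_into_zeros k Hl) as [phi [Hzero Hinj]].
  destruct (Hfin origin in_X_origin) as [l Hl0].
  apply (injective_into_list_bounded l (A_set k) phi); [| exact Hinj].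
  intros n Hn; destruct (Hzero n Hn); apply Hl0; assumption.
Qed.

Lemma gen_omega_A_set_bounded g : gen_omega g -> exists N, forall n, A_set g n -> (n <= N)%nat.
Proof.
  induction 1 as [| k g Hk _ [N IH] | k g Hk _ [N IH]].
  - exists 0%nat; intros n Hn; destruct (A_set_const n Hn).
  - destruct (omega_loop_A_set_bounded k Hk) as [M HM]; exists (Nat.max M N).
    intros n Hn; destruct (A_set_concat n k g Hn) as [Hkn | Hgn];
      [specialize (HM n Hkn) | specialize (IH n Hgn)]; lia.
  - destruct (omega_loop_A_set_bounded k Hk) as [M HM]; exists (Nat.max M N).
    intros n Hn; destruct (A_set_concat n _ g Hn) as [Hkn | Hgn];
      [specialize (HM n (A_set_rev n k Hkn)) | specialize (IH n Hgn)]; lia.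
Qed.

Theorem mainTheorem9 :
  (forall f g : R -> pt, loop_in in_X f -> loop_in in_X g ->
     homotopic_rel in_X f g -> forall n : nat, A_set f n <-> A_set g n) /\
  (forall h : R -> pt, loop_in in_X h ->
     exists phi : nat -> R,
       (forall n, A_set h n -> unit_I (phi n) /\ h (phi n) = origin) /\
       (forall n m, A_set h n -> A_set h m -> phi n = phi m -> n = m)) /\
  (forall f : R -> pt, loop_in in_X f -> in_P_omega f ->
     exists N : nat, forall n, A_set f n -> (n <= N)%nat).
Proof.
  split; [| split].
  - intros f g _ _; apply A_set_homotopy_invariant.
  - exact A_set_injects_into_zeros.
  - intros f _ [g [Hg Hfg]]; destruct (gen_omega_A_set_bounded g Hg) as [N HN].
    exists N; intros n Hn; apply HN, (A_set_homotopy_invariant f g Hfg n), Hn.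
Qed.
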